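(* Let $\alpha>0$, $\alpha\ne1$. For unitaries $U\in\mathcal{U}(d_1)$ and $V\in\mathcal{U}(d_2)$, $H_\alpha(U\otimes V)=H_\alpha(U)+H_\alpha(V)-(\alpha-1)H_\alpha(U)H_\alpha(V)$, where $H_\alpha(U)$, $H_\alpha(V)$ are computed with the displacement operators of $\mathbb{C}^{d_1}$ and $\mathbb{C}^{d_2}$ respectively, and $H_\alpha(U\otimes V)$ with the displacement operators $D_{\mathbf a_1}\otimes D_{\mathbf a_2}$ of $\mathbb{C}^{d_1}\otimes\mathbb{C}^{d_2}$.
   Context: For a Hilbert space $\mathbb{C}^{d}$ with a fixed family of Weyl–Heisenberg displacement operators $\{D_{\mathbf a}\}$ indexed by a set of size $d^2$ (e.g. $d=d_L^n$, $D_{\mathbf a}=D_{\mathbf a_1}\otimes\cdots\otimes D_{\mathbf a_n}$ with single-qudit $D_{(a_1,a_2)}=\tau^{a_1a_2}X^{a_1}Z^{a_2}$, $Z|k\rangle=e^{2\pi ik/d_L}|k\rangle$, $X|k\rangle=|k+1\rangle$, $\tau=-e^{i\pi/d_L}$), and a unitary $U$ on $\mathbb{C}^d$, set $\mathfrak{C}_{\mathbf{ab}}(U)=\frac1d\operatorname{tr}(D_{\mathbf a}^\dagger UD_{\mathbf b}U^\dagger)$, $\mathfrak{D}_{\mathbf{ab}}(U)=|\mathfrak{C}_{\mathbf{ab}}(U)|^2$, and the $\alpha$-Clifford entropy $H_\alpha(U)=\frac{1}{\alpha-1}\Big(1-\frac{1}{d^2}\sum_{\mathbf a,\mathbf b}\mathfrak{D}_{\mathbf{ab}}(U)^\alpha\Big)$.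 *)

From HB Require Import structures.
From mathcomp Require Import all_boot all_order all_algebra.
From mathcomp Require Import reals exp trigo.
From mathcomp Require Import complex mxtens.
Set Implicit Arguments. Unset Strict Implicit. Unset Printing Implicit Defensive.
Import Order.TTheory GRing.Theory Num.Theory.
Local Open Scope ring_scope.

Section CliffordEntropy.
Variable R : realType.

Definition adjmx {m n : nat} (A : 'M[R[i]]_(m, n)) : 'M[R[i]]_(n, m) :=
  map_mx (@conjc R) A^T.

Definition unitary {d : nat} (U : 'M[R[i]]_d) : Prop :=
  U *m adjmx U = 1%:M /\ adjmx U *m U = 1%:M.

Definition sqmod (z : R[i]) : R := (@complex.Re R z) ^+ 2 + (@complex.Im R z) ^+ 2.

Definition cliffC {d : nat} {I : finType} (D : I -> 'M[R[i]]_d)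
  (U : 'M[R[i]]_d) (a b : I) : R[i] :=
  (d%:R)^-1 * \tr (adjmx (D a) *m U *m D b *m adjmx U).

Definition cliffD {d : nat} {I : finType} (D : I -> 'M[R[i]]_d)
  (U : 'M[R[i]]_d) (a b : I) : R :=
  sqmod (cliffC D U a b).

Definition cliff_entropy (alpha : R) {d : nat} {I : finType}
  (D : I -> 'M[R[i]]_d) (U : 'M[R[i]]_d) : R :=
  (alpha - 1)^-1 *
    (1 - ((d ^ 2)%:R)^-1 * \sum_(a : I) \sum_(b : I) powR (cliffD D U a b) alpha).

Definition tens_family {d1 d2 : nat} {I1 I2 : finType}
  (D1 : I1 -> 'M[R[i]]_d1) (D2 : I2 -> 'M[R[i]]_d2) :
  (I1 * I2)%type -> 'M[R[i]]_(d1 * d2) :=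
  fun a => D1 a.1 *t D2 a.2.

(* single qudit of local dimension dL:
   Z|k> = e^{2 pi i k/dL}|k>, X|k> = |k+1 mod dL>, tau = - e^{i pi/dL} *)
Definition wh_omega (dL : nat) : R[i] :=
  Complex (cos (2 * pi / dL%:R)) (sin (2 * pi / dL%:R)).
Definition wh_tau (dL : nat) : R[i] :=
  - Complex (cos (pi / dL%:R)) (sin (pi / dL%:R)).

Definition shiftX (dL : nat) : 'M[R[i]]_dL :=
  \matrix_(k, l) ((k : nat) == (l.+1 %% dL)%N)%:R.
Definition clockZ (dL : nat) : 'M[R[i]]_dL :=
  \matrix_(k, l) (((k : nat) == l)%:R * wh_omega dL ^+ k).

Definition mxpow {n : nat} (A : 'M[R[i]]_n) (k : nat) : 'M[R[i]]_n :=
  iter k (mulmx A) 1%:M.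

Definition wh1 (dL : nat) (a : 'I_dL * 'I_dL) : 'M[R[i]]_dL :=
  wh_tau dL ^+ (a.1 * a.2) *: (mxpow (shiftX dL) a.1 *m mxpow (clockZ dL) a.2).

(* multi-qudit system with local dimensions ls = [:: dL_1; ...; dL_n]:
   C^d with d = dL_1 * ... * dL_n, indices a = (a_1, ..., a_n) with a_j in Z_dL_j^2
   (a set of size d^2), and D_a = D_{a_1} (x) ... (x) D_{a_n}. *)
Fixpoint wh_dim (ls : seq nat) : nat :=
  if ls is dL :: ls' then (dL * wh_dim ls')%N else 1%N.

Fixpoint wh_idx (ls : seq nat) : finType :=
  if ls is dL :: ls' then (('I_dL * 'I_dL) * wh_idx ls')%type else unit.

Fixpoint wh (ls : seq nat) : wh_idx ls -> 'M[R[i]]_(wh_dim ls) :=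
  match ls return wh_idx ls -> 'M[R[i]]_(wh_dim ls) with
  | [::] => fun _ => 1%:M
  | dL :: ls' => fun (a : (('I_dL * 'I_dL) * wh_idx ls')%type) =>
      wh1 a.1 *t @wh ls' a.2
  end.

End CliffordEntropy.

From HB Require Import structures.
From mathcomp Require Import all_boot all_order all_algebra.
From mathcomp Require Import reals exp trigo.
From mathcomp Require Import complex mxtens.
From mathcomp Require Import ring.
Import Order.TTheory GRing.Theory Num.Theory.
Local Open Scope ring_scope.

(* The Clifford coefficients are multiplicative under tensor products,
   C_{(a1,a2)(b1,b2)}(U (x) V) = C_{a1 b1}(U) C_{a2 b2}(V), because trace,
   adjoint and products factor over (x) and 1/(d1 d2) = (1/d1)(1/d2).  Hence
   so is the normalised power sum S(U) = d^-2 sum_{a,b} D_ab(U)^alpha, and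
   H = (1 - S)/(alpha - 1) turns S(U (x) V) = S(U) S(V) into the stated
   identity. *)

Section CliffordEntropyTensor.
Variable R : realType.

Lemma mxtrace_tens m n (A : 'M[R[i]]_m) (B : 'M[R[i]]_n) :
  \tr (A *t B) = \tr A * \tr B.
Proof. by rewrite /mxtrace mulr_sum; apply: eq_bigr => k _; rewrite !mxE. Qed.

Lemma adjmx_tens m n p q (A : 'M[R[i]]_(m, n)) (B : 'M[R[i]]_(p, q)) :
  adjmx (A *t B) = adjmx A *t adjmx B.
Proof. by rewrite /adjmx trmx_tens map_mxT. Qed.

Lemma sqmodM (x y : R[i]) : sqmod (x * y) = sqmod x * sqmod y.
Proof. by case: x => a b; case: y => c d; rewrite /sqmod /=; ring. Qed.

Lemma sqmod_ge0 (x : R[i]) : 0 <= sqmod x.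
Proof. by rewrite /sqmod addr_ge0 // sqr_ge0. Qed.

Variables (d1 d2 : nat) (I1 I2 : finType).
Variables (D1 : I1 -> 'M[R[i]]_d1) (D2 : I2 -> 'M[R[i]]_d2).
Variables (U : 'M[R[i]]_d1) (V : 'M[R[i]]_d2).

Lemma cliffC_tens a b :
  cliffC (tens_family D1 D2) (U *t V) a b =
  cliffC D1 U a.1 b.1 * cliffC D2 V a.2 b.2.
Proof.
rewrite /cliffC /tens_family !adjmx_tens !tensmx_mul mxtrace_tens natrM invfM.
ring.
Qed.

Lemma sum_powR_cliffD_tens alpha :
  \sum_(a : I1 * I2) \sum_(b : I1 * I2)
     powR (cliffD (tens_family D1 D2) (U *t V) a b) alpha =
  (\sum_a \sum_b powR (cliffD D1 U a b) alpha) *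
  (\sum_a \sum_b powR (cliffD D2 V a b) alpha).
Proof.
under eq_bigr => a _ do under eq_bigr => b _ do
  rewrite /cliffD cliffC_tens sqmodM powRM ?sqmod_ge0 //.
symmetry; rewrite big_distrlr pair_bigA /=; apply: eq_bigr => a _.
by rewrite big_distrlr pair_bigA.
Qed.

Lemma cliff_entropy_tens alpha :
  cliff_entropy alpha (tens_family D1 D2) (U *t V) =
    cliff_entropy alpha D1 U + cliff_entropy alpha D2 V
    - (alpha - 1) * cliff_entropy alpha D1 U * cliff_entropy alpha D2 V.
Proof.
rewrite /cliff_entropy sum_powR_cliffD_tens expnMn natrM invfM mulrACA.
set S1 := (d1 ^ 2)%:R^-1 * _; set S2 := (d2 ^ 2)%:R^-1 * _.
have [->|alpha_neq1] := eqVneq alpha 1.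
  by rewrite subrr invr0 !mul0r subr0 addr0.
by clearbody S1 S2; field; rewrite subr_eq0.
Qed.

End CliffordEntropyTensor.

Theorem theorem3 (R : realType) (alpha : R) (ls1 ls2 : seq nat)
  (U : 'M[R[i]]_(wh_dim ls1)) (V : 'M[R[i]]_(wh_dim ls2)) :
  0 < alpha -> alpha != 1 ->
  all (fun dL => 0 < dL)%N ls1 -> all (fun dL => 0 < dL)%N ls2 ->
  unitary U -> unitary V ->
  cliff_entropy alpha (tens_family (@wh R ls1) (@wh R ls2)) (U *t V) =
    cliff_entropy alpha (@wh R ls1) U + cliff_entropy alpha (@wh R ls2) V
    - (alpha - 1) * cliff_entropy alpha (@wh R ls1) U
                  * cliff_entropy alpha (@wh R ls2) V.
Proof. by move=> *; apply: cliff_entropy_tens. Qed.
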